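(* Let $(A,A^* )$ be a left-symmetric bialgebroid. Then for all $x\in\Gamma(A)$ and $\xi\in\Gamma(A^* )$, $$[a_A(x),a_{A^*}(\xi)]=a_{A^*}(L^*_x\xi)-a_A(L^*_\xi x),$$ where the left side is the commutator of vector fields, $L^*_x\xi\in\Gamma(A^* )$ is given by $\langle L^*_x\xi,y\rangle=a_A(x)\langle\xi,y\rangle-\langle\xi,x\cdot_Ay\rangle$, and $L^*_\xi x\in\Gamma(A)$ by $\langle L^*_\xi x,\eta\rangle=a_{A^*}(\xi)\langle x,\eta\rangle-\langle x,\xi\cdot_{A^*}\eta\rangle$.
   Context: A left-symmetric algebroid is a vector bundle $A\to M$ with an $\mathbb R$-bilinear multiplication $\cdot_A$ on $\Gamma(A)$ with $x\cdot_A(y\cdot_Az)-(x\cdot_Ay)\cdot_Az$ symmetric in $x,y$, and an anchor $a_A:A\to TM$ with $x\cdot_A(fy)=f(x\cdot_Ay)+a_A(x)(f)y$, $(fx)\cdot_Ay=f(x\cdot_Ay)$; $[x,y]_A=x\cdot_Ay-y\cdot_Ax$. The coboundary $\delta:C^n(A)\to C^{n+1}(A)$, $C^{n+1}(A)=\Gamma(\wedge^nA^*\otimes A^* )$, is $\delta\varphi(x_1,\dots,x_{n+1})=\sum_{i=1}^n(-1)^{i+1}a_A(x_i)\varphi(\dots,\hat{x_i},\dots,x_{n+1})-\sum_{i=1}^n(-1)^{i+1}\varphi(\dots,\hat{x_i},\dots,x_n,x_i\cdot_Ax_{n+1})+\sum_{i<j\le n}(-1)^{i+j}\varphi([x_i,x_j]_A,\dots,\hat{x_i},\dots,\hat{x_j},\dots,x_{n+1})$.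 The Lie derivative $\mathfrak L_x$ on $\Gamma(A\otimes A)$ is $\mathfrak L_x(y_1\otimes y_2)=(x\cdot_Ay_1)\otimes y_2+y_1\otimes[x,y_2]_A$. For left-symmetric algebroids $A$ and $A^*$ on dual bundles, $[\cdot,\cdot]_{A^*}$, $\delta_*$, $\mathfrak L_\xi$ are defined by the same formulas with $A$ and $A^*$ exchanged. $(A,A^* )$ is a left-symmetric bialgebroid if $\delta[\xi,\eta]_{A^*}=\mathfrak L_\xi\delta\eta-\mathfrak L_\eta\delta\xi$ and $\delta_*[x,y]_A=\mathfrak L_x\delta_*y-\mathfrak L_y\delta_*x$ for all $x,y\in\Gamma(A)$, $\xi,\eta\in\Gamma(A^* )$. *)

(* Algebraic (Serre--Swan) model of a left-symmetric
   bialgebroid: F plays C^oo(M), P plays Gamma(A), Q plays Gamma(A^* ),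
   vector fields are derivations of F. *)
From HB Require Import structures.
From mathcomp Require Import all_boot all_algebra.
From Stdlib Require Import ClassicalEpsilon.
Set Implicit Arguments.
Unset Strict Implicit.
Unset Printing Implicit Defensive.
Import GRing.Theory.
Local Open Scope ring_scope.

Definition is_derivation (F : comRingType) (D : F -> F) : Prop :=
  (forall f g, D (f + g) = D f + D g) /\
  (forall f g, D (f * g) = f * D g + D f * g).

Definition vf_comm (F : comRingType) (D1 D2 : F -> F) : F -> F :=
  fun f => D1 (D2 f) - D2 (D1 f).

Definition lsa_bracket (F : comRingType) (P : lmodType F)
  (mul : P -> P -> P) (x y : P) : P := mul x y - mul y x.

Definition is_left_symmetric_algebroid (F : comRingType) (P : lmodType F)
  (mul : P -> P -> P) (a : P -> F -> F) : Prop :=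
  (forall x y z, mul (x + y) z = mul x z + mul y z) /\
  (forall x y z, mul x (y + z) = mul x y + mul x z) /\
  (forall x y z, mul x (mul y z) - mul (mul x y) z
                 = mul y (mul x z) - mul (mul y x) z) /\
  (forall (f : F) x y, mul x (f *: y) = f *: mul x y + a x f *: y) /\
  (forall (f : F) x y, mul (f *: x) y = f *: mul x y) /\
  (forall x, is_derivation (a x)) /\
  (forall (f : F) x y g, a (f *: x + y) g = f * a x g + a y g).

Definition is_perfect_pairing (F : comRingType) (P Q : lmodType F)
  (pr : P -> Q -> F) : Prop :=
  (forall (f : F) x y xi, pr (f *: x + y) xi = f * pr x xi + pr y xi) /\
  (forall (f : F) x xi eta, pr x (f *: xi + eta) = f * pr x xi + pr x eta) /\
  (forall x, (forall xi, pr x xi = 0) -> x = 0) /\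
  (forall xi, (forall x, pr x xi = 0) -> xi = 0) /\
  (forall phi : P -> F, (forall (f : F) x y, phi (f *: x + y) = f * phi x + phi y) ->
     exists xi, forall x, pr x xi = phi x) /\
  (forall phi : Q -> F, (forall (f : F) xi eta, phi (f *: xi + eta) = f * phi xi + phi eta) ->
     exists x, forall xi, pr x xi = phi xi).

Definition flip_pair (F : comRingType) (P Q : lmodType F) (pr : P -> Q -> F)
  : Q -> P -> F := fun xi x => pr x xi.

(* the element of Q representing the functional phi on P (if any) *)
Definition dual_rep (F : comRingType) (P Q : lmodType F) (pr : P -> Q -> F)
  (phi : P -> F) : Q :=
  epsilon (inhabits (0 : Q)) (fun xi => forall y, pr y xi = phi y).

Definition Lstar (F : comRingType) (P Q : lmodType F) (mul : P -> P -> P)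
  (a : P -> F -> F) (pr : P -> Q -> F) (x : P) (xi : Q) : Q :=
  dual_rep pr (fun y => a x (pr y xi) - pr (mul x y) xi).

Definition adstar (F : comRingType) (P Q : lmodType F) (mul : P -> P -> P)
  (a : P -> F -> F) (pr : P -> Q -> F) (x : P) (xi : Q) : Q :=
  dual_rep pr (fun y => a x (pr y xi) - pr (lsa_bracket mul x y) xi).

(* Lie derivative L_x on Gamma(A (x) A), sections viewed as F-bilinear forms
   on Gamma(A^* ); on y1 (x) y2 it gives (x.y1) (x) y2 + y1 (x) [x,y2]. *)
Definition lie_tensor (F : comRingType) (P Q : lmodType F) (mul : P -> P -> P)
  (a : P -> F -> F) (pr : P -> Q -> F) (x : P) (T : Q -> Q -> F) : Q -> Q -> F :=
  fun xi1 xi2 => a x (T xi1 xi2) - T (Lstar mul a pr x xi1) xi2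
                 - T xi1 (adstar mul a pr x xi2).

Definition coboundary1 (F : comRingType) (P Q : lmodType F) (mul : P -> P -> P)
  (a : P -> F -> F) (pr : P -> Q -> F) (eta : Q) : P -> P -> F :=
  fun x1 x2 => a x1 (pr x2 eta) - pr (mul x1 x2) eta.

(* delta_*[x,y]_A = L_x delta_* y - L_y delta_* x *)
Definition bialg_compat (F : comRingType) (P Q : lmodType F) (pr : P -> Q -> F)
  (mulP : P -> P -> P) (aP : P -> F -> F) (mulQ : Q -> Q -> Q) (aQ : Q -> F -> F)
  : Prop :=
  forall (x y : P) (xi1 xi2 : Q),
    coboundary1 mulQ aQ (flip_pair pr) (lsa_bracket mulP x y) xi1 xi2
    = lie_tensor mulP aP pr x (coboundary1 mulQ aQ (flip_pair pr) y) xi1 xi2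
      - lie_tensor mulP aP pr y (coboundary1 mulQ aQ (flip_pair pr) x) xi1 xi2.

Definition is_ls_bialgebroid (F : comRingType) (P Q : lmodType F) (pr : P -> Q -> F)
  (mulP : P -> P -> P) (aP : P -> F -> F) (mulQ : Q -> Q -> Q) (aQ : Q -> F -> F)
  : Prop :=
  is_perfect_pairing pr /\
  is_left_symmetric_algebroid mulP aP /\
  is_left_symmetric_algebroid mulQ aQ /\
  bialg_compat pr mulP aP mulQ aQ /\
  bialg_compat (flip_pair pr) mulQ aQ mulP aP.

(** Let [K = a_{A*}(L*_x xi) g - a_A(L*_xi x) g - [a_A x, a_{A*} xi] g] be the
    defect of the identity.  Evaluating the compatibility of [delta_*] at the
    pair [(x, g x)] on [(xi, e)], everything cancels except [<x, e> K], so
    [K x = 0].  The defect is linear over the function ring in [x], hence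
    [K * K = K(K x) = 0], and [K = 0] since the function ring has no nilpotents. *)

From HB Require Import structures.
From mathcomp Require Import all_boot all_algebra.
From mathcomp Require Import ring.
From Stdlib Require Import ClassicalEpsilon.
Set Implicit Arguments.
Unset Strict Implicit.
Unset Printing Implicit Defensive.
Import GRing.Theory.
Local Open Scope ring_scope.

Definition is_functional (R : pzRingType) (V : lmodType R) (phi : V -> R) :=
  forall (f : R) x y, phi (f *: x + y) = f * phi x + phi y.

Section Functional.
Variables (R : pzRingType) (V : lmodType R) (phi : V -> R).
Hypothesis phi_lin : is_functional phi.

Lemma functional0 : phi 0 = 0.
Proof.
have := phi_lin 1 0 0; rewrite scale1r addr0 mul1r => phi00.
by apply: (@addrI _ (phi 0)); rewrite -phi00 addr0.
Qed.

Lemma functionalZ c x : phi (c *: x) = c * phi x.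
Proof. by have := phi_lin c x 0; rewrite !addr0 functional0 addr0. Qed.

Lemma functionalD x y : phi (x + y) = phi x + phi y.
Proof. by have := phi_lin 1 x y; rewrite scale1r mul1r. Qed.

Lemma functionalN x : phi (- x) = - phi x.
Proof. by rewrite -scaleN1r functionalZ mulN1r. Qed.

End Functional.

Lemma flip_perfect_pairing (F : comNzRingType) (P Q : lmodType F) (pr : P -> Q -> F) :
  is_perfect_pairing pr -> is_perfect_pairing (flip_pair pr).
Proof.
case=> prL [prR [ndP [ndQ [repQ repP]]]].
split; first by move=> f xi eta x; apply: prR.
split; first by move=> f x y xi; apply: prL.
by [].
Qed.

Section PerfectPairing.
Variables (F : comNzRingType) (P Q : lmodType F) (pr : P -> Q -> F).
Hypothesis pairing : is_perfect_pairing pr.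

Lemma pairing_functional_l xi : is_functional (pr^~ xi).
Proof. by move=> f x y; case: pairing => prL _; apply: prL. Qed.

Lemma pairing_functional_r x : is_functional (pr x).
Proof. by move=> f xi eta; case: pairing => _ [prR _]; apply: prR. Qed.

Lemma pairingZl c x xi : pr (c *: x) xi = c * pr x xi.
Proof. exact: functionalZ (pairing_functional_l xi) c x. Qed.

Lemma pairingDl x y xi : pr (x + y) xi = pr x xi + pr y xi.
Proof. exact: functionalD (pairing_functional_l xi) x y. Qed.

Lemma pairingNl x xi : pr (- x) xi = - pr x xi.
Proof. exact: functionalN (pairing_functional_l xi) x. Qed.

Lemma pairingZr c x xi : pr x (c *: xi) = c * pr x xi.
Proof. exact: functionalZ (pairing_functional_r x) c xi. Qed.

Lemma pairing_nondeg_l x : (forall xi, pr x xi = 0) -> x = 0.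
Proof. by case: pairing => _ [_ [ndP _]]; apply: ndP. Qed.

Lemma pairing_inj_r xi eta : (forall x, pr x xi = pr x eta) -> xi = eta.
Proof.
move=> eq_xi_eta; apply/eqP; rewrite -subr_eq0; apply/eqP.
case: pairing => _ [_ [_ [ndQ _]]]; apply: ndQ => x.
by rewrite (functionalD (pairing_functional_r x)) (functionalN (pairing_functional_r x))
  eq_xi_eta subrr.
Qed.

Lemma dual_repE (phi : P -> F) :
  is_functional phi -> forall y, pr y (dual_rep pr phi) = phi y.
Proof.
case: pairing => _ [_ [_ [_ [repQ _]]]] /repQ phi_rep.
exact: (epsilon_spec _ _ phi_rep).
Qed.

End PerfectPairing.

Section LeftSymmetricAlgebroid.
Variables (F : comNzRingType) (V : lmodType F) (mul : V -> V -> V) (a : V -> F -> F).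
Hypothesis lsa : is_left_symmetric_algebroid mul a.

Lemma mulDl x y z : mul (x + y) z = mul x z + mul y z.
Proof. by case: lsa. Qed.

Lemma mulDr x y z : mul x (y + z) = mul x y + mul x z.
Proof. by case: lsa => _ []. Qed.

Lemma mulZr f x y : mul x (f *: y) = f *: mul x y + a x f *: y.
Proof. by case: lsa => _ [_ [_ []]]. Qed.

Lemma mulZl f x y : mul (f *: x) y = f *: mul x y.
Proof. by case: lsa => _ [_ [_ [_ []]]]. Qed.

Lemma anchorD x f h : a x (f + h) = a x f + a x h.
Proof. by case: lsa => _ [_ [_ [_ [_ [/(_ x) []]]]]]. Qed.

Lemma anchorM x f h : a x (f * h) = f * a x h + a x f * h.
Proof. by case: lsa => _ [_ [_ [_ [_ [/(_ x) []]]]]]. Qed.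

Lemma anchor_functional g : is_functional (a^~ g).
Proof. by move=> f x y; case: lsa => _ [_ [_ [_ [_ [_ aD]]]]]; apply: aD. Qed.

Lemma anchorZ c x g : a (c *: x) g = c * a x g.
Proof. exact: functionalZ (anchor_functional g) c x. Qed.

Lemma lsa_bracket_scale_self g x : lsa_bracket mul x (g *: x) = a x g *: x.
Proof. by rewrite /lsa_bracket mulZr mulZl addrAC subrr add0r. Qed.

End LeftSymmetricAlgebroid.

Section DualOperations.
Variables (F : comNzRingType) (P Q : lmodType F) (pr : P -> Q -> F).
Variables (mul : P -> P -> P) (a : P -> F -> F).
Hypotheses (pairing : is_perfect_pairing pr) (lsa : is_left_symmetric_algebroid mul a).

Definition differential (g : F) : Q := dual_rep pr (fun z => a z g).

Lemma differentialE g z : pr z (differential g) = a z g.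
Proof. exact: (dual_repE pairing (anchor_functional lsa g)). Qed.

Lemma LstarE x xi y : pr y (Lstar mul a pr x xi) = a x (pr y xi) - pr (mul x y) xi.
Proof.
apply: (dual_repE pairing) => c z w.
by rewrite (mulDr lsa) (mulZr lsa) !(pairingDl pairing) !(pairingZl pairing)
  (anchorD lsa) (anchorM lsa); ring.
Qed.

Lemma adstarE x xi y :
  pr y (adstar mul a pr x xi) = a x (pr y xi) - pr (lsa_bracket mul x y) xi.
Proof.
apply: (dual_repE pairing) => c z w; rewrite /lsa_bracket.
rewrite (mulDr lsa) (mulZr lsa) (mulDl lsa) (mulZl lsa).
by rewrite !(pairingDl pairing, pairingNl pairing, pairingZl pairing)
  (anchorD lsa) (anchorM lsa); ring.
Qed.

Lemma LstarZl g x xi : Lstar mul a pr (g *: x) xi = g *: Lstar mul a pr x xi.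
Proof.
apply: (pairing_inj_r pairing) => y.
by rewrite (pairingZr pairing) !LstarE (anchorZ lsa) (mulZl lsa) (pairingZl pairing); ring.
Qed.

Lemma adstarZl g x xi :
  adstar mul a pr (g *: x) xi = g *: adstar mul a pr x xi + pr x xi *: differential g.
Proof.
apply: (pairing_inj_r pairing) => y.
rewrite (functionalD (pairing_functional_r pairing y)) !(pairingZr pairing).
rewrite !adstarE differentialE /lsa_bracket (mulZl lsa) (mulZr lsa) (anchorZ lsa).
by rewrite !(pairingDl pairing, pairingNl pairing, pairingZl pairing); ring.
Qed.

Lemma pairing_adstar_self x xi : pr x (adstar mul a pr x xi) = a x (pr x xi).
Proof.
by rewrite adstarE /lsa_bracket subrr (functional0 (pairing_functional_l pairing xi)) subr0.
Qed.

Lemma coboundary1Z g eta x1 x2 :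
  coboundary1 mul a pr (g *: eta) x1 x2
  = g * coboundary1 mul a pr eta x1 x2 + a x1 g * pr x2 eta.
Proof. by rewrite /coboundary1 !(pairingZr pairing) (anchorM lsa); ring. Qed.

Lemma coboundary1Zl eta c x1 x2 :
  coboundary1 mul a pr eta (c *: x1) x2 = c * coboundary1 mul a pr eta x1 x2.
Proof. by rewrite /coboundary1 (anchorZ lsa) (mulZl lsa) (pairingZl pairing); ring. Qed.

Lemma coboundary1_functional eta x1 : is_functional (coboundary1 mul a pr eta x1).
Proof.
move=> c x2 y2; rewrite /coboundary1 (mulDr lsa) (mulZr lsa).
by rewrite !(pairingDl pairing, pairingZl pairing) (anchorD lsa) (anchorM lsa); ring.
Qed.

Lemma lie_tensor_scale_add x g (h : Q -> F) (T T' : Q -> Q -> F) :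
  (forall xi e, T' xi e = g * T xi e + h xi * pr x e) ->
  forall xi e, lie_tensor mul a pr x T' xi e
  = g * lie_tensor mul a pr x T xi e + a x g * T xi e
    + (a x (h xi) - h (Lstar mul a pr x xi)) * pr x e.
Proof.
move=> T'E xi e; rewrite /lie_tensor !T'E pairing_adstar_self.
by rewrite (anchorD lsa) !(anchorM lsa); ring.
Qed.

Lemma lie_tensorZ g x (T : Q -> Q -> F) :
  (forall c xi e, T (c *: xi) e = c * T xi e) -> (forall xi, is_functional (T xi)) ->
  forall xi e, lie_tensor mul a pr (g *: x) T xi e
  = g * lie_tensor mul a pr x T xi e - pr x e * T xi (differential g).
Proof.
move=> TZl T_lin xi e; rewrite /lie_tensor LstarZl adstarZl TZl T_lin.
by rewrite (functionalZ (T_lin xi)) (anchorZ lsa); ring.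
Qed.

End DualOperations.

Section Bialgebroid.
Variables (F : comNzRingType) (P Q : lmodType F) (pr : P -> Q -> F).
Variables (mulP : P -> P -> P) (aP : P -> F -> F) (mulQ : Q -> Q -> Q) (aQ : Q -> F -> F).
Hypothesis pairing : is_perfect_pairing pr.
Hypothesis lsaP : is_left_symmetric_algebroid mulP aP.
Hypothesis lsaQ : is_left_symmetric_algebroid mulQ aQ.

Let pairing_flip := flip_perfect_pairing pairing.

Definition anchor_defect x xi g :=
  aQ (Lstar mulP aP pr x xi) g - aP (Lstar mulQ aQ (flip_pair pr) xi x) g
  - vf_comm (aP x) (aQ xi) g.

Lemma anchor_defectE x xi g :
  anchor_defect x xi g
  = aQ (Lstar mulP aP pr x xi) g - aP x (aQ xi g) + pr x (mulQ xi (differential pr aP g)).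
Proof.
rewrite /anchor_defect /vf_comm -(differentialE pairing lsaP).
have := LstarE pairing_flip lsaQ xi x (differential pr aP g); rewrite /flip_pair => ->.
by rewrite (differentialE pairing lsaP); ring.
Qed.

Lemma anchor_defectZ c x xi g : anchor_defect (c *: x) xi g = c * anchor_defect x xi g.
Proof.
rewrite !anchor_defectE (LstarZl pairing lsaP) (anchorZ lsaQ) (anchorZ lsaP).
by rewrite (pairingZl pairing); ring.
Qed.

Lemma anchor_defect0 xi g : anchor_defect 0 xi g = 0.
Proof. by rewrite -(scale0r 0) anchor_defectZ mul0r. Qed.

Hypothesis compat : bialg_compat pr mulP aP mulQ aQ.

Lemma pairing_mul_anchor_defect x xi g e : pr x e * anchor_defect x xi g = 0.
Proof.
have := compat x (g *: x) xi e; move/eqP; rewrite -subr_eq0 => /eqP <-.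
rewrite (lsa_bracket_scale_self lsaP).
rewrite (coboundary1Z pairing_flip lsaQ).
rewrite (lie_tensor_scale_add pairing lsaP (coboundary1Z pairing_flip lsaQ g x)).
rewrite (lie_tensorZ pairing lsaP g x (coboundary1Zl pairing_flip lsaQ x)
           (coboundary1_functional pairing_flip lsaQ x)).
rewrite anchor_defectE /coboundary1 /flip_pair (differentialE pairing lsaP); ring.
Qed.

Lemma anchor_defect_scale_self x xi g : anchor_defect x xi g *: x = 0.
Proof.
apply: (pairing_nondeg_l pairing) => e.
by rewrite (pairingZl pairing) mulrC pairing_mul_anchor_defect.
Qed.

End Bialgebroid.

Theorem mainTheorem4 (F : comRingType) (P Q : lmodType F) (pr : P -> Q -> F)
  (mulP : P -> P -> P) (aP : P -> F -> F) (mulQ : Q -> Q -> Q) (aQ : Q -> F -> F) :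
  (forall e : F, e * e = 0 -> e = 0) ->
  is_ls_bialgebroid pr mulP aP mulQ aQ ->
  forall (x : P) (xi : Q) (f : F),
    vf_comm (aP x) (aQ xi) f
    = aQ (Lstar mulP aP pr x xi) f - aP (Lstar mulQ aQ (flip_pair pr) xi x) f.
Proof.
move=> reduced [pairing [lsaP [lsaQ [compat _]]]] x xi g.
have defect0 : anchor_defect pr mulP aP mulQ aQ x xi g = 0.
  apply: reduced; rewrite -(anchor_defectZ pairing lsaP lsaQ).
  by rewrite (anchor_defect_scale_self pairing lsaP lsaQ compat) anchor_defect0.
exact/esym/subr0_eq.
Qed.
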